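(* Let ${\cal Q}$ be a collection of partial partitions of a set $X$. Then there is a one-to-one correspondence between the minimal restricted chordal completions of ${\rm int}({\cal Q})$ and the minimal chordal sandwiches of $({\rm int^*}({\cal Q}),{\rm forb}({\cal Q}))$.
   Context: A partial partition of $X$ is a partition $A_1|\ldots|A_t$ ($t\geq 2$) of a non-empty subset of $X$; the $A_i$ are its cells. The partial partition intersection graph ${\rm int}({\cal Q})$ has vertex set $\{(A,\pi): A \text{ is a cell of } \pi\in{\cal Q}\}$, with $(A,\pi)$ and $(A',\pi')$ adjacent iff $A\cap A'\neq\emptyset$. A graph is chordal if it has no induced cycle of length at least four; a chordal completion of $G=(V,E)$ is a chordal graph $(V,E')$ with $E\subseteq E'$. A restricted chordal completion of ${\rm int}({\cal Q})$ is a chordal completion $G'$ of ${\rm int}({\cal Q})$ such that whenever $A_1,A_2$ are distinct cells of the same $\pi\in{\cal Q}$, $(A_1,\pi)$ and $(A_2,\pi)$ are not adjacent in $G'$; it is minimal if no proper subgraph of $G'$ is a restricted chordal completion of ${\rm int}({\cal Q})$. The cell intersection graph ${\rm int^*}({\cal Q})$ has vertex set $\{A: A \text{ is a cell of some } \pi\in{\cal Q}\}$, with $A,A'$ adjacent iff $A\cap A'\neq\emptyset$. The graph ${\rm forb}({\cal Q})$ has the same vertex set, with $A,A'$ adjacent iff $A,A'$ are (distinct) cells of some common $\pi\in{\cal Q}$. For graphs $G_1=(V,E_1)$, $G_2=(V,E_2)$ with $E_1\cap E_2=\emptyset$, a chordal sandwich of $(G_1,G_2)$ is a chordal graph $(V,E')$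 with $E_1\subseteq E'$ and $E'\cap E_2=\emptyset$; it is minimal if no proper subgraph of it is a chordal sandwich of $(G_1,G_2)$. *)

From mathcomp Require Import all_boot.
Set Implicit Arguments. Unset Strict Implicit. Unset Printing Implicit Defensive.

Section Graphs.
Variable T : finType.

(* A (simple, undirected) graph with vertex set V : {set T} is represented by
   its edge set E : {set {set T}}, each edge being a 2-element subset of V. *)
Definition is_graph (V : {set T}) (E : {set {set T}}) : Prop :=
  forall e, e \in E -> #|e| = 2 /\ e \subset V.

Definition induced_cycle (E : {set {set T}}) (s : seq T) : Prop :=
  uniq s /\ 4 <= size s /\
  forall (x0 : T) (i j : nat), i < j -> j < size s ->
    ([set nth x0 s i; nth x0 s j] \in E <->
     (j = i.+1 \/ (i = 0 /\ j = (size s).-1))).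

Definition chordal (V : {set T}) (E : {set {set T}}) : Prop :=
  is_graph V E /\ ~ (exists s, induced_cycle E s).

Definition chordal_completion (V : {set T}) (E E' : {set {set T}}) : Prop :=
  chordal V E' /\ E \subset E'.

Definition chordal_sandwich (V : {set T}) (E1 E2 E' : {set {set T}}) : Prop :=
  chordal V E' /\ E1 \subset E' /\ E' :&: E2 = set0.

Definition minimal_chordal_sandwich (V : {set T}) (E1 E2 E' : {set {set T}})
  : Prop :=
  chordal_sandwich V E1 E2 E' /\
  forall F : {set {set T}}, F \proper E' -> ~ chordal_sandwich V E1 E2 F.

End Graphs.

Section PartialPartitions.
Variable X : finType.

(* A partial partition of X: a partition (in the mathcomp sense: nonempty,
   pairwise disjoint cells) of some subset of X, with at least two cells. *)
Definition partial_partition (P : {set {set X}}) : bool :=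
  partition P (cover P) && (1 < #|P|).

Variable Q : {set {set {set X}}}.

Definition int_vertices : {set {set X} * {set {set X}}} :=
  [set p | (p.2 \in Q) && (p.1 \in p.2)].

Definition int_edges : {set {set ({set X} * {set {set X}})}} :=
  [set [set u; v] | u in int_vertices, v in int_vertices
                  & (u != v) && (u.1 :&: v.1 != set0)].

Definition restricted_chordal_completion
    (E' : {set {set ({set X} * {set {set X}})}}) : Prop :=
  chordal_completion int_vertices int_edges E' /\
  forall (A1 A2 : {set X}) (pi : {set {set X}}),
    pi \in Q -> A1 \in pi -> A2 \in pi -> A1 != A2 ->
    [set (A1, pi); (A2, pi)] \notin E'.

Definition minimal_restricted_chordal_completion
    (E' : {set {set ({set X} * {set {set X}})}}) : Prop :=
  restricted_chordal_completion E' /\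
  forall F : {set {set ({set X} * {set {set X}})}}, F \proper E' -> ~ restricted_chordal_completion F.

Definition cells : {set {set X}} := [set A | [exists pi in Q, A \in pi]].

Definition int_star_edges : {set {set {set X}}} :=
  [set [set A; B] | A in cells, B in cells & (A != B) && (A :&: B != set0)].

Definition forb_edges : {set {set {set X}}} :=
  [set [set A; B] | A in cells, B in cells
                  & (A != B) && [exists pi in Q, (A \in pi) && (B \in pi)]].

End PartialPartitions.

From mathcomp Require Import all_boot zify.
Set Implicit Arguments. Unset Strict Implicit. Unset Printing Implicit Defensive.

(* The correspondence sends a sandwich F to its [lift], in which two copies
   (A, pi), (B, pi') are joined iff A = B or AB is an edge of F, and a
   completion E to its [project] onto cells.  Copies of one cell are adjacent
   twins in a lift, so lifts of chordal graphs are chordal.  Conversely, for a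
   restricted chordal completion E, the graph [joined_cells E] of pairs of
   cells all of whose copies are joined is a chordal sandwich whose lift lies
   below E; chordality comes from Dirac's simplicial vertex lemma.  Hence
   minimal completions are exactly the lifts of minimal sandwiches, and
   [project] inverts [lift] on graphs. *)

Section ChordalGraphs.
Variables (T : finType) (E : {set {set T}}).
Hypothesis E_loopfree : forall a : T, [set a; a] \notin E.

Definition adj : rel T := fun a b => [set a; b] \in E.

Lemma adjC : symmetric adj.
Proof. by move=> a b; rewrite /adj setUC. Qed.

Lemma adj_irr a : adj a a = false.
Proof. exact/negbTE/E_loopfree. Qed.

Definition cycle_adj (n i j : nat) : bool :=
  [|| j == i.+1, i == j.+1, (i == 0) && (j == n.-1) | (j == 0) && (i == n.-1)].

Lemma cycle_adjC n : symmetric (cycle_adj n).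
Proof. rewrite /cycle_adj => i j; lia. Qed.

Lemma cycle_adj_neighbours n i : 4 <= n -> i < n -> exists p q,
  [/\ p < n, q < n, cycle_adj n i p, cycle_adj n i q &
    [/\ p != q, ~~ cycle_adj n p q &
        forall j, j < n -> cycle_adj n i j -> j = p \/ j = q]].
Proof.
rewrite /cycle_adj => n_ge4 lt_i_n.
have [->|i_n0] := eqVneq i 0.
  by exists n.-1, 1; split; [lia..|split; [lia..|move=> j; lia]].
have [->|i_nlast] := eqVneq i n.-1.
  by exists n.-2, 0; split; [lia..|split; [lia..|move=> j; lia]].
by exists i.-1, i.+1; split; [lia..|split; [lia..|move=> j; lia]].
Qed.

Lemma induced_cycle_adj s x0 i j : induced_cycle E s ->
  i < size s -> j < size s ->
  adj (nth x0 s i) (nth x0 s j) = cycle_adj (size s) i j.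
Proof.
move=> [_ [size_s chordless]] lt_i lt_j.
have [lt_ij|lt_ji|->] := ltngtP i j.
- apply/idP/idP => [/(chordless x0 _ _ lt_ij lt_j)|]; rewrite /cycle_adj; first lia.
  by move=> adj_ij; apply/(chordless x0 _ _ lt_ij lt_j); lia.
- rewrite adjC; apply/idP/idP => [/(chordless x0 _ _ lt_ji lt_i)|];
    rewrite /cycle_adj; first lia.
  by move=> adj_ji; apply/(chordless x0 _ _ lt_ji lt_i); lia.
- by rewrite adj_irr /cycle_adj; lia.
Qed.

Lemma induced_cycle_in V s x0 i : is_graph V E -> induced_cycle E s ->
  i < size s -> nth x0 s i \in V.
Proof.
move=> graphE cyc lt_i; have [_ [size_s _]] := cyc.
set j := if i.+1 < size s then i.+1 else 0.
have lt_j : j < size s by rewrite /j; case: ifP; lia.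
have : adj (nth x0 s i) (nth x0 s j).
  by rewrite induced_cycle_adj // /cycle_adj /j; case: ifP; lia.
by case/graphE => _ /subsetP; apply; rewrite !inE eqxx.
Qed.

Fixpoint induced_path (x : T) (p : seq T) : bool :=
  if p is y :: p' then
    [&& adj x y, x \notin p, all (fun z => ~~ adj x z) p' & induced_path y p']
  else true.

Lemma induced_subpath x p : path adj x p -> uniq (x :: p) ->
  exists q, [/\ induced_path x q, last x q = last x p & {subset q <= p}].
Proof.
have [n] := ubnP (size p); elim: n x p => // n IHn x [|y p] size_p.
  by exists [::].
rewrite /= => /andP[adj_xy path_p] /andP[x_notin uniq_p].
have [/hasP[z z_p adj_xz]|no_chord] := boolP (has (adj x) p).
- case/splitPr: z_p size_p path_p x_notin uniq_p => p1 p2 size_p path_p x_notin.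
  rewrite cat_uniq => /and3P[_ _ /andP[_ uniq_zp2]].
  have [|||q [ip_q last_q sub_q]] := IHn x (z :: p2).
  + by move: size_p; rewrite /= size_cat /=; lia.
  + by move: path_p; rewrite cat_path /= adj_xz => /and3P[_ _ ->].
  + rewrite cons_uniq uniq_zp2 andbT; apply: contra x_notin => x_zp2.
    by rewrite inE mem_cat x_zp2 !orbT.
  exists q; split=> //; first by rewrite last_q /= last_cat.
  by move=> w /sub_q w_zp2; rewrite inE mem_cat w_zp2 !orbT.
- have [|q [ip_q last_q sub_q]] := IHn y p _ path_p uniq_p; first by rewrite /= in size_p; lia.
  exists (y :: q); split; [|by rewrite /= last_q|].
  + rewrite /= adj_xy ip_q andbT inE negb_or.
    move: x_notin; rewrite inE negb_or => /andP[-> x_notin] /=.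
    rewrite (contra (@sub_q x)) //=; apply/allP => w /sub_q w_p.
    by apply: contra no_chord => adj_xw; apply/hasP; exists w.
  + by move=> w; rewrite !inE => /predU1P[->|/sub_q ->]; rewrite ?eqxx ?orbT.
Qed.

Lemma induced_path_uniq x q : induced_path x q -> uniq (x :: q).
Proof.
elim: q x => [|y q IH] x // /and4P[_ x_notin _ /IH].
by move=> uniq_yq; rewrite cons_uniq x_notin.
Qed.

Lemma induced_path_adj x q x0 i j : induced_path x q -> i < j -> j < size (x :: q) ->
  adj (nth x0 (x :: q) i) (nth x0 (x :: q) j) = (j == i.+1).
Proof.
elim: q x i j => [|y q IH] x i j; first by case: i j => [|?] [|?] /=; lia.
case/and4P => adj_xy _ no_chord ip_yq; case: i j => [|i] [|j] //= lt_ij lt_j.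
  case: j lt_ij lt_j => [|j] _ lt_j; first by rewrite eqxx.
  by rewrite (negbTE (allP no_chord _ (mem_nth _ _))).
exact: IH.
Qed.

Lemma induced_path_cycle v x r y : induced_path x (rcons r y) ->
  adj v x -> adj v y -> all (fun z => ~~ adj v z) r -> v \notin r -> r != [::] ->
  induced_cycle E (v :: x :: rcons r y).
Proof.
move=> ip_xry adj_vx adj_vy no_chord v_notin r_n0.
have size_r : 0 < size r by case: r r_n0 {ip_xry no_chord v_notin}.
split; [|split].
- rewrite cons_uniq induced_path_uniq // andbT !inE mem_rcons inE (negbTE v_notin) orbF.
  by apply/norP; split; [apply: contraTneq adj_vx|apply: contraTneq adj_vy];
    move=> ->; rewrite adj_irr.
- by rewrite /= size_rcons; lia.
- move=> x0 [|i] [|j] // lt_ij; rewrite -[_ \in E]/(adj _ _) /= size_rcons => lt_j.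
  + case: j lt_ij lt_j => [|j] _ lt_j /=; first by rewrite adj_vx; split=> //; left.
    rewrite nth_rcons; case: ifP => [lt_jr|ge_jr].
      by rewrite (negbTE (allP no_chord _ (mem_nth _ lt_jr))); split=> // -[]; lia.
    have -> : j = size r by lia.
    by rewrite eqxx adj_vy; split=> // _; right.
  + rewrite induced_path_adj //; last by rewrite /= size_rcons; lia.
    by split=> [/eqP->|[[->]|[]//]]; [left|].
Qed.

Definition chordal_on (W : {set T}) := forall s, {subset s <= W} -> ~ induced_cycle E s.

Definition simplicial (W : {set T}) w :=
  forall a b, a \in W -> b \in W -> adj w a -> adj w b -> a != b -> adj a b.

Definition clique (K : {set T}) := forall a b, a \in K -> b \in K -> a != b -> adj a b.

Lemma chordal_on_sub (W U : {set T}) : U \subset W -> chordal_on W -> chordal_on U.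
Proof. by move=> /subsetP sUW chW s sU; apply: chW => z /sU /sUW. Qed.

Lemma simplicial_widen (U W : {set T}) w : simplicial U w ->
  (forall z, z \in W -> adj w z -> z \in U) -> simplicial W w.
Proof. by move=> simp_w NwU x y xW yW wx wy; apply: simp_w; rewrite ?NwU. Qed.

Section Separator.
Variables (W : {set T}) (a b : T).

(* [comp] is the component of [b] in [W] minus the closed neighbourhood of
   [a]; its outer neighbourhood [border] is a minimal [a]-[b] separator. *)
Definition far : {set T} := [set z in W | (z != a) && ~~ adj a z].
Definition far_adj : rel T := fun u v => [&& adj u v, u \in far & v \in far].
Definition comp : {set T} := [set z | connect far_adj b z].
Definition border : {set T} :=
  [set z in W | (z \notin comp) && [exists c in comp, adj z c]].

Hypothesis b_far : b \in far.

Lemma far_adj_sym : symmetric far_adj.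
Proof. by move=> u v; rewrite /far_adj adjC (andbC (u \in far)). Qed.

Lemma a_notin_far : a \notin far.
Proof. by rewrite inE eqxx andbF. Qed.

Lemma far_sub : far \subset W.
Proof. by apply/subsetP => z; rewrite inE => /andP[]. Qed.

Lemma border_sub : border \subset W.
Proof. by apply/subsetP => z; rewrite inE => /andP[]. Qed.

Lemma b_comp : b \in comp.
Proof. by rewrite inE connect0. Qed.

Lemma comp_connect c z : c \in comp -> connect far_adj c z -> z \in comp.
Proof. by rewrite !inE; apply: connect_trans. Qed.

Lemma comp_far z : z \in comp -> z \in far.
Proof.
rewrite inE => /connectP[p path_p ->]; case/lastP: p path_p => // p w.
by rewrite rcons_path last_rcons => /andP[_ /and3P[]].
Qed.

Lemma border_notin_comp z : z \in border -> z \notin comp.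
Proof. by rewrite inE => /and3P[]. Qed.

Lemma comp_nbr c z : c \in comp -> z \in W -> adj c z -> (z \in comp) || (z \in border).
Proof.
move=> c_comp zW adj_cz; have [//|z_comp] := boolP (z \in comp).
by rewrite inE zW z_comp; apply/exists_inP; exists c; rewrite // adjC.
Qed.

Lemma adj_border z : z \in border -> adj a z.
Proof.
rewrite inE => /and3P[zW z_comp /exists_inP[c c_comp adj_zc]].
apply: contraNT z_comp => nadj_az; apply: (comp_connect c_comp).
have z_far : z \in far.
  rewrite inE zW nadj_az andbT; apply: contraTneq (comp_far c_comp) => za.
  by rewrite inE -za adj_zc !andbF.
by apply: connect1; rewrite /far_adj adjC adj_zc comp_far.
Qed.

Lemma a_notin_comp : a \notin comp.
Proof. by apply: contra a_notin_far => /comp_far. Qed.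

Lemma a_notin_border : a \notin border.
Proof. by apply/negP => /adj_border; rewrite adj_irr. Qed.

Lemma border_induced_path x y : x \in border -> y \in border -> x != y ->
  exists r, induced_path x (rcons r y) /\ {subset r <= comp}.
Proof.
rewrite !inE => /and3P[xW x_comp /exists_inP[cx cx_comp adj_xcx]].
move=> /and3P[yW y_comp /exists_inP[cy cy_comp adj_ycy]] xy.
have /connectP[p path_p cy_last] : connect far_adj cx cy.
  apply: connect_trans (_ : connect far_adj b cy); last by rewrite inE in cy_comp.
  by rewrite (sym_connect_sym far_adj_sym); rewrite inE in cx_comp.
have p_comp : {subset cx :: p <= comp}.
  by move=> w /(path_connect path_p); apply: comp_connect.
have path_xy : path adj x (cx :: rcons p y).
  rewrite /= adj_xcx rcons_path -cy_last adjC adj_ycy andbT.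
  by apply: sub_path path_p => u v /and3P[].
have last_y : last x (cx :: rcons p y) = y by rewrite /= last_rcons.
case: (shortenP path_xy) last_y => p' path_p' uniq_p' sub_p' last_p'.
have [q [ip_q last_q sub_q]] := induced_subpath path_p' uniq_p'.
rewrite last_p' in last_q.
case/lastP: q ip_q last_q sub_q => [_ /= yx|r z ip_q]; first by rewrite yx eqxx in xy.
rewrite last_rcons => zy sub_q; rewrite {z}zy in ip_q sub_q.
exists r; split=> // w w_r.
have wy : w != y.
  move: (induced_path_uniq ip_q); rewrite cons_uniq rcons_uniq => /and3P[_ y_r _].
  by apply: contraNneq y_r => <-.
have : w \in cx :: rcons p y by apply/sub_p'/sub_q; rewrite mem_rcons inE w_r orbT.
by rewrite inE mem_rcons inE (negbTE wy) /= => w_cxp; apply: p_comp; rewrite inE.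
Qed.

Lemma border_clique : a \in W -> chordal_on W -> clique border.
Proof.
move=> aW chW x y x_bd y_bd xy; apply/negPn/negP => nadj_xy.
have [r [ip_xry r_comp]] := border_induced_path x_bd y_bd xy.
have r_n0 : r != [::].
  by apply: contraNneq nadj_xy => r0; move: ip_xry; rewrite r0 => /and4P[].
have r_far w : w \in r -> w \in far by move/r_comp/comp_far.
apply: (chW (a :: x :: rcons r y)).
- move=> w; rewrite !inE mem_rcons inE => /or4P[/eqP->|/eqP->|/eqP->|/r_far];
    by [|apply: (subsetP border_sub)|apply: (subsetP far_sub)].
- apply: induced_path_cycle; rewrite ?adj_border //.
    by apply/allP => w /r_far; rewrite inE => /and3P[].
  by apply: contra a_notin_far => /r_far.
Qed.

(* Recursing into [U] with the clique [border] yields a simplicial vertex of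
   [W] avoiding [K]. *)
Definition reduces_to (K U : {set T}) :=
  [/\ U \proper W, (exists2 u, u \in U & u \notin border) &
      forall w, w \in U -> w \notin border -> simplicial U w ->
        w \notin K /\ simplicial W w].

Hypothesis aW : a \in W.

Lemma reduces_to_outside_comp K : clique K -> (exists2 k, k \in K & k \in comp) ->
  reduces_to K (W :\: comp).
Proof.
move=> clK [k0 k0K k0_comp]; split.
- rewrite properEneq subsetDl andbT; apply: contraTneq b_comp => UW.
  by have := subsetP far_sub b b_far; rewrite -UW inE => /andP[].
- by exists a; rewrite ?a_notin_border // inE aW a_notin_comp.
move=> w; rewrite inE => /andP[w_comp wW] w_bd simp_w; split.
- apply: contra w_bd => wK; have [k0w|k0w] := eqVneq k0 w.
    by rewrite -k0w k0_comp in w_comp.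
  by move: (comp_nbr k0_comp wW (clK _ _ k0K wK k0w)); rewrite (negbTE w_comp).
- apply: (simplicial_widen simp_w) => z zW adj_wz; rewrite inE zW andbT.
  apply: contra w_bd => z_comp; rewrite inE wW w_comp.
  by apply/exists_inP; exists z.
Qed.

Lemma reduces_to_comp (K : {set T}) : (forall k, k \in K -> k \notin comp) ->
  reduces_to K (comp :|: border).
Proof.
move=> K_comp; split.
- rewrite properEneq; apply/andP; split.
    by apply: contraTneq aW => <-; rewrite inE negb_or a_notin_comp a_notin_border.
  by rewrite subUset border_sub andbT; apply/subsetP => z /comp_far /(subsetP far_sub).
- exists b; first by rewrite inE b_comp.
  by apply/negP => /border_notin_comp; rewrite b_comp.
move=> w; rewrite inE => /orP[w_comp|->//] _ simp_w; split.
  by apply: contraL w_comp => /K_comp.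
apply: (simplicial_widen simp_w) => z zW adj_wz.
by rewrite inE; apply: comp_nbr w_comp zW adj_wz.
Qed.

Lemma reduces_to_exists K : clique K -> exists U, reduces_to K U.
Proof.
move=> clK; have [/exists_inP[k kK k_comp]|K_comp] := boolP [exists k in K, k \in comp].
  by exists (W :\: comp); apply: reduces_to_outside_comp => //; exists k.
exists (comp :|: border); apply: reduces_to_comp => k kK.
by apply: contra K_comp => k_comp; apply/exists_inP; exists k.
Qed.

End Separator.

(* Dirac's lemma, strengthened so that it can be proved by recursion into
   minimal separators. *)
Lemma chordal_simplicial W K : chordal_on W -> clique K ->
  (exists2 u, u \in W & u \notin K) -> exists w, [/\ w \in W, w \notin K & simplicial W w].
Proof.
have [n] := ubnP #|W|; elim: n W K => // n IHn W K lt_W chW clK [u uW uK].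
have [/exists_inP[a aW /exists_inP[b bW /andP[ab nadj_ab]]]|W_clique] :=
  boolP [exists a in W, exists b in W, (a != b) && ~~ adj a b]; last first.
  exists u; split=> // x y xW yW _ _ xy; apply: contraNT W_clique => nadj_xy.
  by apply/exists_inP; exists x => //; apply/exists_inP; exists y; rewrite ?xy.
have b_far : b \in far W a by rewrite inE bW eq_sym ab.
have [U [UW U_bd reduce]] := reduces_to_exists b_far aW clK.
have [||w [wU w_bd simp_w]] := IHn U (border W a b) _ _ (border_clique b_far aW chW) U_bd.
- by have := proper_card UW; lia.
- exact: chordal_on_sub (proper_sub UW) chW.
have [wK simpW] := reduce w wU w_bd simp_w.
by exists w; split=> //; apply: (subsetP (proper_sub UW)).
Qed.

End ChordalGraphs.

Lemma eq_set2 (T : finType) (a b c d : T) :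
  [set a; b] = [set c; d] -> (a = c /\ b = d) \/ (a = d /\ b = c).
Proof.
move=> ab_cd.
have /set2P a_cd : a \in [set c; d] by rewrite -ab_cd set21.
have /set2P b_cd : b \in [set c; d] by rewrite -ab_cd set22.
have /set2P c_ab : c \in [set a; b] by rewrite ab_cd set21.
have /set2P d_ab : d \in [set a; b] by rewrite ab_cd set22.
case: a_cd b_cd c_ab d_ab => -> [] -> [] ? [] ?; subst; by [left|right].
Qed.

Section IntersectionGraphs.
Variables (X : finType) (Q : {set {set {set X}}}).
Hypothesis Q_partial : forall P, P \in Q -> partial_partition P.

Local Notation V := ({set X} * {set {set X}})%type.
Local Notation Vi := (int_vertices Q).
Local Notation sandwich := (chordal_sandwich (cells Q) (int_star_edges Q) (forb_edges Q)).
Local Notation minimal_sandwich :=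
  (minimal_chordal_sandwich (cells Q) (int_star_edges Q) (forb_edges Q)).

Definition lift (F : {set {set {set X}}}) : {set {set V}} :=
  [set [set u; v] | u in Vi, v in Vi & (u != v) && ((u.1 == v.1) || ([set u.1; v.1] \in F))].

Definition project (E : {set {set V}}) : {set {set {set X}}} :=
  [set [set u.1; v.1] | u in Vi, v in Vi & (u.1 != v.1) && ([set u; v] \in E)].

Lemma cellsP A : reflect (exists2 pi, pi \in Q & A \in pi) (A \in cells Q).
Proof. by rewrite inE; apply: (iffP exists_inP). Qed.

Lemma int_vertex_cell u : u \in Vi -> u.1 \in cells Q.
Proof. by rewrite inE => /andP[pi_Q A_pi]; apply/cellsP; exists u.2. Qed.

Lemma cell_int_vertex A : A \in cells Q -> exists pi, (A, pi) \in Vi.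
Proof. by case/cellsP => pi pi_Q A_pi; exists pi; rewrite inE pi_Q. Qed.

Lemma int_vertex_n0 u : u \in Vi -> u.1 != set0.
Proof.
rewrite inE => /andP[/Q_partial/andP[/and3P[_ _ set0_pi] _] A_pi].
by apply: contraNneq set0_pi => <-.
Qed.

Lemma in_int u v : u \in Vi -> v \in Vi -> u != v -> u.1 :&: v.1 != set0 ->
  [set u; v] \in int_edges Q.
Proof.
by move=> uV vV uv meet_uv; apply/imset2P; exists u v => //; rewrite inE vV uv meet_uv.
Qed.

Lemma in_int_star A B : A \in cells Q -> B \in cells Q -> A != B -> A :&: B != set0 ->
  [set A; B] \in int_star_edges Q.
Proof.
by move=> AQ BQ AB meet_AB; apply/imset2P; exists A B => //; rewrite inE BQ AB meet_AB.
Qed.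

Lemma in_forb A B pi : pi \in Q -> A \in pi -> B \in pi -> A != B ->
  [set A; B] \in forb_edges Q.
Proof.
move=> pi_Q A_pi B_pi AB.
have cell_pi C : C \in pi -> C \in cells Q by move=> C_pi; apply/cellsP; exists pi.
apply/imset2P; exists A B; rewrite ?cell_pi //.
by rewrite inE cell_pi //= AB; apply/exists_inP; exists pi; rewrite ?A_pi.
Qed.

Lemma int_edges_inv e : e \in int_edges Q -> exists u v, e = [set u; v] /\
  [/\ u \in Vi, v \in Vi, u != v & u.1 :&: v.1 != set0].
Proof. by case/imset2P => u v uV; rewrite inE => /and3P[vV uv meet_uv] ->; exists u, v. Qed.

Lemma int_star_edges_inv e : e \in int_star_edges Q -> exists A B, e = [set A; B] /\
  [/\ A \in cells Q, B \in cells Q, A != B & A :&: B != set0].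
Proof. by case/imset2P => A B AQ; rewrite inE => /and3P[BQ AB meet_AB] ->; exists A, B. Qed.

Lemma forb_edges_inv e : e \in forb_edges Q -> exists A B pi, e = [set A; B] /\
  [/\ pi \in Q, A \in pi, B \in pi & A != B].
Proof.
case/imset2P => A B _; rewrite inE => /and3P[_ AB /exists_inP[pi pi_Q /andP[A_pi B_pi]]] ->.
by exists A, B, pi.
Qed.

Lemma mem_lift F u v : [set u; v] \in lift F <->
  [/\ u \in Vi, v \in Vi, u != v & (u.1 == v.1) || ([set u.1; v.1] \in F)].
Proof.
split; last by move=> [uV vV uv uv_F]; apply/imset2P; exists u v; rewrite // inE vV uv.
case/imset2P => u' v' u'V; rewrite [v' \in _]inE => /and3P[v'V u'v' u'v'_F].
case/eq_set2 => -[-> ->]; split=> //; first by rewrite eq_sym.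
by rewrite eq_sym setUC.
Qed.

Lemma lift_loopfree F u : [set u; u] \notin lift F.
Proof. by apply/negP => /mem_lift[_ _ /eqP]. Qed.

Lemma lift_graph F : is_graph Vi (lift F).
Proof.
move=> e /imset2P[u v uV]; rewrite inE => /and3P[vV uv _] ->.
by rewrite cards2 uv; split=> //; apply/subsetP => w /set2P[]->.
Qed.

Lemma lift_same_cell F u v w : u \in Vi -> u.1 = v.1 -> u != w ->
  [set v; w] \in lift F -> [set u; w] \in lift F.
Proof. by move=> uV uv uw /mem_lift[_ wV _ vw_F]; apply/mem_lift; rewrite uv. Qed.

(* Vertices of [lift F] with the same cell are adjacent twins, which an induced
   cycle of length at least four cannot contain. *)
Lemma lift_cycle_uniq_cells F s : induced_cycle (lift F) s -> uniq (map fst s).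
Proof.
move=> cyc; have [uniq_s [size_s _]] := cyc; pose y0 : V := (set0, set0).
have sV k : k < size s -> nth y0 s k \in Vi :=
  induced_cycle_in (@lift_loopfree F) y0 (@lift_graph F) cyc.
have adj_s k l : k < size s -> l < size s ->
    ([set nth y0 s k; nth y0 s l] \in lift F) = cycle_adj (size s) k l :=
  induced_cycle_adj (@lift_loopfree F) y0 cyc.
have s_inj k l : k < size s -> l < size s -> (nth y0 s k == nth y0 s l) = (k == l).
  by move=> lt_k lt_l; apply: nth_uniq.
apply/(uniqP y0.1) => i j; rewrite !inE size_map => lt_i lt_j.
rewrite !(nth_map y0) // => cell_ij; apply/eqP/negPn/negP => ij.
have adj_ij : cycle_adj (size s) j i.
  by rewrite -adj_s //; apply/mem_lift; rewrite !sV // s_inj // eq_sym ij cell_ij eqxx.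
have [p [q [lt_p lt_q jp jq [pq npq nbrs]]]] := cycle_adj_neighbours size_s lt_j.
have [t [lt_t jt ti nit]] : exists t,
    [/\ t < size s, cycle_adj (size s) j t, t != i & ~~ cycle_adj (size s) i t].
  case: (nbrs i lt_i adj_ij) => ->; [exists q|exists p]; split=> //.
  - by rewrite eq_sym.
  - by rewrite cycle_adjC.
move: nit; rewrite -adj_s // => /negP; apply; apply: lift_same_cell cell_ij _ _.
- exact: sV.
- by rewrite s_inj // eq_sym.
- by rewrite adj_s.
Qed.

Lemma lift_chordal F : chordal (cells Q) F -> chordal Vi (lift F).
Proof.
move=> [_ no_cycle]; split=> [|[s cyc]]; first exact: lift_graph.
apply: no_cycle; exists (map fst s); have [_ [size_s chordless]] := cyc.
have uniq_cells := lift_cycle_uniq_cells cyc; pose y0 : V := (set0, set0).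
split=> //; split=> [|A0 i j lt_ij]; rewrite size_map //= => lt_j.
have lt_i := ltn_trans lt_ij lt_j.
have cells_ij : (nth y0 s i).1 != (nth y0 s j).1.
  by rewrite -!(nth_map y0 A0) // nth_uniq ?size_map // neq_ltn lt_ij.
rewrite !(nth_map y0) // -(chordless y0 i j lt_ij lt_j) mem_lift (negbTE cells_ij).
have sV k : k < size s -> nth y0 s k \in Vi :=
  induced_cycle_in (@lift_loopfree F) y0 (@lift_graph F) cyc.
split=> [in_F|[] //]; split; rewrite ?in_F ?sV //.
by apply: contraNneq cells_ij => ->.
Qed.

Lemma lift_restricted F : sandwich F -> restricted_chordal_completion Q (lift F).
Proof.
move=> [chF [int_F forb_F]]; split; first split.
- exact: lift_chordal.
- apply/subsetP => e /int_edges_inv[u [v [-> [uV vV uv meet_uv]]]].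
  apply/mem_lift; split=> //; have [//|cells_uv] := eqVneq u.1 v.1.
  by rewrite (subsetP int_F) ?orbT // in_int_star ?int_vertex_cell.
- move=> A1 A2 pi pi_Q A1_pi A2_pi A12; apply/negP => /mem_lift[_ _ _] /=.
  rewrite (negbTE A12) /= => A12_F.
  have : [set A1; A2] \in F :&: forb_edges Q by rewrite inE A12_F (in_forb pi_Q).
  by rewrite forb_F inE.
Qed.


Definition joined_cells (E : {set {set V}}) : {set {set {set X}}} :=
  [set [set A; B] | A in cells Q, B in cells Q & (A != B) &&
     [forall u in Vi, forall v in Vi, ((u.1 == A) && (v.1 == B)) ==> ([set u; v] \in E)]].

Lemma mem_joined_cells E A B : [set A; B] \in joined_cells E <->
  [/\ A \in cells Q, B \in cells Q, A != B &
     forall u v, u \in Vi -> v \in Vi -> u.1 = A -> v.1 = B -> [set u; v] \in E].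
Proof.
split=> [|[AQ BQ AB join_AB]]; last first.
  apply/imset2P; exists A B; rewrite // inE BQ AB.
  apply/forall_inP => u uV; apply/forall_inP => v vV.
  by apply/implyP => /andP[/eqP + /eqP]; apply: join_AB.
case/imset2P => A' B' A'Q; rewrite [B' \in _]inE => /and3P[B'Q A'B' /forall_inP join_A'B'].
have join u v : u \in Vi -> v \in Vi -> u.1 = A' -> v.1 = B' -> [set u; v] \in E.
  move=> uV vV uA' vB'; move/forall_inP: (join_A'B' u uV) => /(_ v vV).
  by rewrite uA' vB' !eqxx.
case/eq_set2 => -[-> ->]; split=> //; first by rewrite eq_sym.
by move=> u v uV vV uB' vA'; rewrite setUC; apply: join.
Qed.

Lemma joined_cells_loopfree E A : [set A; A] \notin joined_cells E.
Proof. by apply/negP => /mem_joined_cells[_ _ /eqP]. Qed.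

Lemma joined_cells_graph E : is_graph (cells Q) (joined_cells E).
Proof.
move=> e /imset2P[A B AQ]; rewrite inE => /and3P[BQ AB _] ->.
by rewrite cards2 AB; split=> //; apply/subsetP => C /set2P[]->.
Qed.

(* The copies of the cells of an induced cycle of [joined_cells E] have a
   simplicial vertex, which would join the two cycle neighbours of its cell. *)
Lemma joined_cells_chordal E : chordal Vi E -> chordal (cells Q) (joined_cells E).
Proof.
move=> [graphE noE]; split=> [|[s cyc]]; first exact: joined_cells_graph.
have E_loopfree u : [set u; u] \notin E.
  by apply/negP => /graphE[]; rewrite setUid cards1.
have [uniq_s [size_s _]] := cyc; pose A0 : {set X} := set0.
have s_cells i : i < size s -> nth A0 s i \in cells Q :=
  induced_cycle_in (@joined_cells_loopfree E) A0 (@joined_cells_graph E) cyc.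
have adj_s := induced_cycle_adj (@joined_cells_loopfree E) A0 cyc.
pose W := [set u in Vi | u.1 \in s].
have [|||w [wW _ simp_w]] := chordal_simplicial E_loopfree (W := W) (K := set0).
- by move=> s' _ cyc'; apply: noE; exists s'.
- by move=> a b; rewrite inE.
- have s_n0 : 0 < size s by lia.
  have [pi0 s0V] := cell_int_vertex (s_cells 0 s_n0).
  exists (nth A0 s 0, pi0); last by rewrite inE.
  by rewrite /W inE s0V mem_nth.
move: wW; rewrite inE => /andP[wV w_s].
set i := index w.1 s; have lt_i : i < size s by rewrite index_mem.
have s_i : nth A0 s i = w.1 by rewrite nth_index.
have [p [q [lt_p lt_q ip iq [pq npq _]]]] := cycle_adj_neighbours size_s lt_i.
have adj_w t u : t < size s -> cycle_adj (size s) i t -> u \in Vi -> u.1 = nth A0 s t ->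
    adj E w u.
  move=> lt_t it uV ut.
  have : [set nth A0 s i; nth A0 s t] \in joined_cells E by rewrite [_ \in _]adj_s.
  by rewrite s_i => /mem_joined_cells[_ _ _]; apply.
move/negP: npq; apply; rewrite -adj_s //; apply/mem_joined_cells.
split; rewrite ?s_cells ?nth_uniq // => u v uV vV up vq.
apply: (simp_w u v).
- by rewrite /W inE uV up mem_nth.
- by rewrite /W inE vV vq mem_nth.
- exact: (adj_w p).
- exact: (adj_w q).
- by apply: contra_neq pq => uv; apply/eqP; rewrite -(nth_uniq A0 lt_p lt_q uniq_s) -up -vq uv.
Qed.

Lemma restricted_joined_cells E : restricted_chordal_completion Q E ->
  sandwich (joined_cells E) /\ lift (joined_cells E) \subset E.
Proof.
move=> [[chE int_E] restrE]; split; first split; [|split|].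
- exact: joined_cells_chordal.
- apply/subsetP => e /int_star_edges_inv[A [B [-> [AQ BQ AB meet_AB]]]].
  apply/mem_joined_cells; split=> // u v uV vV uA vB.
  apply: (subsetP int_E); apply: in_int; rewrite ?uA ?vB //.
  by apply: contra_neq AB => uv; rewrite -uA -vB uv.
- apply/setP => e; rewrite !inE; apply/negP => /andP[e_J /forb_edges_inv].
  move=> [A [B [pi [eAB [pi_Q A_pi B_pi AB]]]]]; rewrite {e}eAB in e_J.
  move/mem_joined_cells: e_J => [_ _ _ join_AB].
  by move/negP: (restrE A B pi pi_Q A_pi B_pi AB); apply; apply: join_AB; rewrite // inE pi_Q.
- apply/subsetP => e /imset2P[u v uV]; rewrite inE => /and3P[vV uv cells_uv] ->.
  case/orP: cells_uv => [/eqP uv1|/mem_joined_cells[_ _ _]]; last exact.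
  by apply: (subsetP int_E); apply: in_int; rewrite // -uv1 setIid int_vertex_n0.
Qed.

Lemma project_lift F : is_graph (cells Q) F -> project (lift F) = F.
Proof.
move=> graphF; apply/setP => e; apply/idP/idP.
  case/imset2P => u v uV; rewrite inE => /and3P[vV uv1 /mem_lift[_ _ _ uv_F]] ->.
  by rewrite (negbTE uv1) in uv_F.
move=> e_F; have [/eqP/cards2P[A [B [AB e_AB]]] /subsetP sub_e] := graphF e e_F.
subst e.
have [pA A_V] := cell_int_vertex (sub_e A (set21 A B)).
have [pB B_V] := cell_int_vertex (sub_e B (set22 A B)).
apply/imset2P; exists (A, pA) (B, pB); rewrite // [_ \in [set _ in _ | _]]inE B_V AB /=.
by apply/mem_lift; rewrite A_V B_V e_F orbT; split=> //; apply: contra_neq AB => -[].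
Qed.

Lemma lift_subset (F F' : {set {set {set X}}}) : F \subset F' -> lift F \subset lift F'.
Proof.
move=> /subsetP sFF'; apply/subsetP => e /imset2P[u v uV]; rewrite inE.
move=> /and3P[vV uv cells_uv] ->; apply/mem_lift; split=> //.
by case/orP: cells_uv => [->//|/sFF' ->]; rewrite orbT.
Qed.

Lemma project_subset (E E' : {set {set V}}) : E \subset E' -> project E \subset project E'.
Proof.
move=> /subsetP sEE'; apply/subsetP => e /imset2P[u v uV]; rewrite inE.
by move=> /and3P[vV uv1 /sEE' uv_E'] ->; apply/imset2P; exists u v; rewrite // inE vV uv1.
Qed.

Lemma lift_proper F F' : is_graph (cells Q) F -> is_graph (cells Q) F' ->
  (lift F \proper lift F') = (F \proper F').
Proof.
move=> graphF graphF'; suff lift_subsetE G G' : is_graph (cells Q) G ->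
    is_graph (cells Q) G' -> (lift G \subset lift G') = (G \subset G').
  by rewrite !properE !lift_subsetE.
move=> graphG graphG'; apply/idP/idP => [|/lift_subset //].
by move/project_subset; rewrite !project_lift.
Qed.

Lemma minimal_restricted_liftE E : minimal_restricted_chordal_completion Q E ->
  lift (joined_cells E) = E.
Proof.
move=> [rccE minE]; have [sandJ liftJ_E] := restricted_joined_cells rccE.
apply/eqP; rewrite eqEproper liftJ_E /=; apply/negP => /minE; apply.
exact: lift_restricted sandJ.
Qed.

Lemma project_minimal E : minimal_restricted_chordal_completion Q E ->
  minimal_sandwich (project E).
Proof.
move=> minE; have [rccE below_E] := minE.
have [sandJ _] := restricted_joined_cells rccE.
have graphJ : is_graph (cells Q) (joined_cells E) by case: sandJ => [[]].
rewrite -(minimal_restricted_liftE minE) project_lift //.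
split=> // F FJ sandF; apply: (below_E (lift F)); last exact: lift_restricted.
by rewrite -(minimal_restricted_liftE minE) lift_proper //; case: sandF => [[]].
Qed.

Lemma lift_minimal F : minimal_sandwich F -> minimal_restricted_chordal_completion Q (lift F).
Proof.
move=> [sandF minF]; split=> [|E E_F rccE]; first exact: lift_restricted.
have [sandJ liftJ_E] := restricted_joined_cells rccE.
apply: (minF (joined_cells E) _ sandJ).
rewrite -lift_proper; [|by case: sandJ => [[]]|by case: sandF => [[]]].
exact: sub_proper_trans liftJ_E E_F.
Qed.

End IntersectionGraphs.

Unset Implicit Arguments.
Theorem theorem5 (X : finType) (Q : {set {set {set X}}})
  (HQ : forall P, P \in Q -> partial_partition P) :
  exists (f : {set {set ({set X} * {set {set X}})}} -> {set {set {set X}}})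
         (g : {set {set {set X}}} -> {set {set ({set X} * {set {set X}})}}),
    (forall E, minimal_restricted_chordal_completion Q E ->
       minimal_chordal_sandwich (cells Q) (int_star_edges Q) (forb_edges Q) (f E)
       /\ g (f E) = E) /\
    (forall F, minimal_chordal_sandwich (cells Q) (int_star_edges Q) (forb_edges Q) F ->
       minimal_restricted_chordal_completion Q (g F) /\ f (g F) = F).
Proof.
exists (project Q), (lift Q); split=> [E minE | F minF].
  split; first exact: project_minimal.
  have [[[graphJ _] _] _] := restricted_joined_cells HQ minE.1.
  by rewrite -(minimal_restricted_liftE HQ minE) project_lift.
split; first exact: lift_minimal.
by apply: project_lift; case: minF => [[[]]].
Qed.
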